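(* The class $\mathcal{S}_d$ is not closed under asymptotic equivalence: there exist density functions $p_1,p_2$ on $\mathbb{R}$ and a constant $c>0$ such that $p_1\in\mathcal{S}_d$, $p_2\notin\mathcal{S}_d$, and $p_2(x)\sim c\,p_1(x)$.
   Context: For positive functions $f,g$ defined on some $[a,\infty)$, $f(x)\sim g(x)$ means $\lim_{x\to\infty}f(x)/g(x)=1$. A density function is a measurable $g:\mathbb{R}\to[0,\infty)$ with $\int_{-\infty}^{\infty} g=1$. For integrable $f,g$, $f\otimes g(x):=\int_{-\infty}^{\infty} f(x-u)g(u)\,du$. The class $\mathbf{L}$ consists of nonnegative measurable $g$ on $\mathbb{R}$ with $g(x)>0$ for all sufficiently large $x$ and $g(x+a)\sim g(x)$ for every $a\in\mathbb{R}$. $\mathcal{L}_d$ is the set of density functions in $\mathbf{L}$; $\mathcal{S}_d$ is the set of $g\in\mathcal{L}_d$ with $g\otimes g(x)\sim 2g(x)$. A class $\mathcal{C}$ of density functions is closed under asymptotic equivalence if $p_1\in\mathcal{C}$, $p_2$ a density function, and $p_2(x)\sim c\,p_1(x)$ for some $c>0$ imply $p_2\in\mathcal{C}$. *)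

From Stdlib Require Import Reals Lra.
Open Scope R_scope.

Definition asym_equiv (f g : R -> R) : Prop :=
  forall eps, 0 < eps -> exists M, forall x, M <= x -> Rabs (f x / g x - 1) < eps.

Definition loc_RI (f : R -> R) : Prop :=
  forall a b, a <= b -> inhabited (Riemann_integrable f a b).

Definition has_integral (f : R -> R) (l : R) : Prop :=
  loc_RI f /\
  forall eps, 0 < eps -> exists M, forall a b, a <= -M -> M <= b ->
    forall pr : Riemann_integrable f a b, Rabs (RiemannInt pr - l) < eps.

(* Density function (nonnegative, integral 1). Measurability is rendered by
   local Riemann integrability. *)
Definition density (g : R -> R) : Prop :=
  (forall x, 0 <= g x) /\ has_integral g 1.

Definition classL (g : R -> R) : Prop :=
  (forall x, 0 <= g x) /\
  (exists X, forall x, X <= x -> 0 < g x) /\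
  (forall a, asym_equiv (fun x => g (x + a)) g).

Definition Ld (g : R -> R) : Prop := density g /\ classL g.

Definition conv_sq_asym (g : R -> R) : Prop :=
  exists X (h : R -> R),
    (forall x, X <= x -> has_integral (fun u => g (x - u) * g u) (h x)) /\
    asym_equiv h (fun x => 2 * g x).

Definition Sd (g : R -> R) : Prop := Ld g /\ conv_sq_asym g.

(* [p1] is the normalised density [y ^ (- alpha y)] on [y >= e] (shifted to start at 0), whose
   index [alpha y = 3 + sin (32 ln ln y)] oscillates between 2 and 4 so slowly that [p1] is
   long-tailed and of dominated variation; the classical splitting of the convolution integral then
   gives [p1 \in S_d].  [p2] equals [p1 / 2] on the right half-line and puts its other half of mass
   on the polynomial left tail [1 / (2 (1 - u)^2)].  In [p2 * p2 (x)] this left tail brings in the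
   values of [p2] near points [Y] slightly beyond [x]; taking [x] where the index is 4 and [Y] where
   it is 2 makes [p2 * p2 (x)] much larger than [p2 x], so [p2 \notin S_d]. *)

From Stdlib Require Import Reals Lra Classical.
From Coquelicot Require Import Coquelicot.
Open Scope R_scope.

Lemma exp_le_mono x y : x <= y -> exp x <= exp y.
Proof. intros [Hlt | ->]; [left; apply exp_increasing |]; lra. Qed.

Lemma exp_le_1_plus_2x x : 0 <= x <= / 2 -> exp x <= 1 + 2 * x.
Proof.
  intros Hx.
  assert (Hinv : exp x = / exp (- x)) by (rewrite exp_Ropp, Rinv_inv; reflexivity).
  pose proof (exp_ineq1_le (- x)).
  rewrite Hinv. apply Rle_trans with (/ (1 - x)).
  - apply Rinv_le_contravar; lra.
  - apply (Rmult_le_reg_l (1 - x)); [lra |]. rewrite Rinv_r by lra. nra.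
Qed.

Lemma ln_sub_le y1 y2 : 0 < y1 -> y1 <= y2 -> ln y2 - ln y1 <= (y2 - y1) / y1.
Proof.
  intros H1 H2.
  rewrite <- ln_div by lra.
  pose proof (exp_ineq1_le (ln (y2 / y1))) as H.
  rewrite exp_ln in H by (apply Rdiv_lt_0_compat; lra).
  replace ((y2 - y1) / y1) with (y2 / y1 - 1) by (field; lra). lra.
Qed.

Lemma sin_lipschitz a b : Rabs (sin a - sin b) <= Rabs (a - b).
Proof.
  assert (Hlt : forall a b, a < b -> Rabs (sin b - sin a) <= Rabs (b - a)).
  { clear. intros a b Hab.
    destruct (MVT_cor2 sin cos a b Hab) as [c [-> _]].
    { intros c _. apply derivable_pt_lim_sin. }
    rewrite Rabs_mult. pose proof (COS_bound c).
    assert (Rabs (cos c) <= 1) by (apply Rabs_le; lra).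
    pose proof (Rabs_pos (b - a)). nra. }
  destruct (Rtotal_order a b) as [H | [-> | H]].
  - rewrite Rabs_minus_sym, (Rabs_minus_sym a b). apply Hlt; lra.
  - rewrite !Rminus_diag, Rabs_R0. lra.
  - apply Hlt; lra.
Qed.

Lemma ln_ge_1 y : exp 1 <= y -> 1 <= ln y.
Proof. intro Hy. rewrite <- (ln_exp 1). apply ln_le; [apply exp_pos | lra]. Qed.

Lemma exp_1_gt_2 : 2 < exp 1.
Proof. pose proof (exp_ineq1 1). lra. Qed.

Definition alpha (y : R) := 3 + sin (32 * ln (ln y)).
Definition F (y : R) := exp (- (alpha y * ln y)).

Lemma alpha_bounds y : 2 <= alpha y <= 4.
Proof. unfold alpha. pose proof (SIN_bound (32 * ln (ln y))). lra. Qed.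

Lemma F_pos y : 0 < F y.
Proof. apply exp_pos. Qed.

Lemma F_exp_exp s : F (exp (exp s)) = exp (- ((3 + sin (32 * s)) * exp s)).
Proof. unfold F, alpha. rewrite !ln_exp. reflexivity. Qed.

Lemma F_le_inv_sqr y : exp 1 <= y -> F y <= / (y * y).
Proof.
  intro Hy. pose proof (ln_ge_1 y Hy). pose proof (alpha_bounds y).
  pose proof exp_1_gt_2.
  apply Rle_trans with (exp (- (ln y + ln y))).
  - apply exp_le_mono. nra.
  - rewrite exp_Ropp, exp_plus, exp_ln by lra. lra.
Qed.

(* [100 = 32 * 3 + 4]: the change of [alpha] (Lipschitz in [ln ln y]) times [ln y2], plus the
   change of [ln y] times [alpha y1 <= 4]. *)
Lemma exponent_lipschitz y1 y2 : exp 1 <= y1 -> y1 <= y2 -> ln y2 - ln y1 <= 2 ->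
  Rabs (alpha y2 * ln y2 - alpha y1 * ln y1) <= 100 * (ln y2 - ln y1).
Proof.
  intros H1 H2 HD.
  pose proof exp_1_gt_2.
  pose proof (ln_ge_1 y1 H1) as Hl1.
  assert (Hl12 : ln y1 <= ln y2) by (apply ln_le; lra).
  set (l1 := ln y1) in *. set (l2 := ln y2) in *. set (D := l2 - l1) in *.
  assert (Hll : ln l2 - ln l1 <= D / l1) by (apply ln_sub_le; lra).
  assert (Hll0 : 0 <= ln l2 - ln l1) by (assert (ln l1 <= ln l2) by (apply ln_le; lra); lra).
  assert (Hsin : Rabs (alpha y2 - alpha y1) <= 32 * (D / l1)).
  { unfold alpha; fold l1 l2.
    replace (3 + sin (32 * ln l2) - (3 + sin (32 * ln l1)))
      with (sin (32 * ln l2) - sin (32 * ln l1)) by ring.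
    eapply Rle_trans; [apply sin_lipschitz |].
    replace (32 * ln l2 - 32 * ln l1) with (32 * (ln l2 - ln l1)) by ring.
    rewrite Rabs_mult, Rabs_pos_eq, Rabs_pos_eq; lra. }
  assert (Hratio : D / l1 * l2 <= D * 3).
  { replace (D / l1 * l2) with (D * (1 + D / l1)) by (unfold D; field; lra).
    apply Rmult_le_compat_l; [unfold D; lra |].
    assert (D / l1 <= D) by
      (unfold Rdiv; rewrite <- (Rmult_1_r D) at 2;
       apply Rmult_le_compat_l; [unfold D; lra |];
       rewrite <- Rinv_1; apply Rinv_le_contravar; lra).
    lra. }
  pose proof (alpha_bounds y1).
  replace (alpha y2 * l2 - alpha y1 * l1) with ((alpha y2 - alpha y1) * l2 + alpha y1 * D)
    by (unfold D; ring).
  eapply Rle_trans; [apply Rabs_triang |].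
  rewrite !Rabs_mult, (Rabs_pos_eq l2), (Rabs_pos_eq (alpha y1)), (Rabs_pos_eq D)
    by (unfold D; lra).
  pose proof (Rabs_pos (alpha y2 - alpha y1)).
  assert (Rabs (alpha y2 - alpha y1) * l2 <= 32 * (D / l1) * l2)
    by (apply Rmult_le_compat_r; lra).
  assert (alpha y1 * D <= 4 * D) by (apply Rmult_le_compat_r; unfold D; lra).
  lra.
Qed.

Lemma F_ratio y1 y2 : exp 1 <= y1 -> y1 <= y2 -> y2 <= 3 * y1 ->
  F y1 <= exp (100 * ((y2 - y1) / y1)) * F y2 /\
  F y2 <= exp (100 * ((y2 - y1) / y1)) * F y1.
Proof.
  intros H1 H2 H3. pose proof exp_1_gt_2.
  assert (Hd : ln y2 - ln y1 <= (y2 - y1) / y1) by (apply ln_sub_le; lra).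
  assert (Hd2 : (y2 - y1) / y1 <= 2)
    by (apply (Rmult_le_reg_r y1); [lra |]; unfold Rdiv; rewrite Rmult_assoc, Rinv_l; lra).
  pose proof (exponent_lipschitz y1 y2 H1 H2 ltac:(lra)) as HE.
  apply Rabs_le_between in HE.
  unfold F. rewrite <- !exp_plus. split; apply exp_le_mono; lra.
Qed.

Lemma F_far y1 y2 : exp 1 <= y1 -> y1 <= y2 -> y2 <= 3 * y1 -> F y1 <= exp 200 * F y2.
Proof.
  intros H1 H2 H3. pose proof exp_1_gt_2.
  destruct (F_ratio y1 y2 H1 H2 H3) as [Hr _].
  eapply Rle_trans; [exact Hr |].
  apply Rmult_le_compat_r; [left; apply F_pos |]. apply exp_le_mono.
  apply (Rmult_le_reg_r y1); [lra |].
  unfold Rdiv; rewrite Rmult_assoc, Rmult_assoc, Rinv_l; lra.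
Qed.

Lemma F_near y1 y2 eta : exp 1 <= y1 -> y1 <= y2 -> y2 - y1 <= eta * y1 -> 0 <= eta <= / 200 ->
  Rabs (F y2 - F y1) <= 200 * eta * F y1 /\ Rabs (F y1 - F y2) <= 200 * eta * F y2.
Proof.
  intros H1 H2 H3 Heta. pose proof exp_1_gt_2.
  set (B := 100 * ((y2 - y1) / y1)).
  assert (HB : 0 <= B <= 100 * eta).
  { unfold B. split.
    - apply Rmult_le_pos; [lra |]. apply Rdiv_le_0_compat; lra.
    - apply Rmult_le_compat_l; [lra |].
      apply (Rmult_le_reg_r y1); [lra |].
      unfold Rdiv; rewrite Rmult_assoc, Rinv_l; lra. }
  destruct (F_ratio y1 y2 H1 H2 ltac:(nra)) as [Ha Hb]; fold B in Ha, Hb.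
  assert (Hup : exp B <= 1 + 2 * B) by (apply exp_le_1_plus_2x; lra).
  pose proof (F_pos y1). pose proof (F_pos y2).
  split; apply Rabs_le; split; nra.
Qed.

(* Shifted by [e] so that [ln y >= 1] and [ln (ln y)] is meaningful on the whole half-line. *)
Definition tail (u : R) := F (u + exp 1).

Lemma tail_pos u : 0 < tail u.
Proof. apply F_pos. Qed.

Lemma tail_continuous u : 0 <= u -> continuous tail u.
Proof.
  intro Hu. pose proof exp_1_gt_2.
  assert (Hln : 0 < ln (u + exp 1)) by (rewrite <- ln_1; apply ln_increasing; lra).
  apply (ex_derive_continuous (K := R_AbsRing) (V := R_NormedModule)).
  unfold tail, F, alpha. auto_derive. repeat split; lra.
Qed.

Lemma tail_le_inv_sqr u : 0 <= u -> tail u <= / ((u + exp 1) * (u + exp 1)).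
Proof. intro Hu. apply F_le_inv_sqr. lra. Qed.

Lemma tail_long_tailed eps A : 0 < eps -> 0 <= A -> exists X, forall x t, X <= x -> Rabs t <= A ->
  Rabs (tail (x + t) - tail x) <= eps * tail x.
Proof.
  intros Heps HA. pose proof exp_1_gt_2.
  set (eta := Rmin (/ 200) (eps / 200)).
  assert (Heta : 0 < eta <= / 200 /\ 200 * eta <= eps).
  { unfold eta. repeat split; [apply Rmin_glb_lt; lra | apply Rmin_l |].
    pose proof (Rmin_r (/ 200) (eps / 200)). lra. }
  assert (HAeta : 0 <= A / eta) by (apply Rdiv_le_0_compat; lra).
  assert (Hfar : forall y, A / eta <= y -> A <= eta * y).
  { intros y Hy. apply Rle_trans with (eta * (A / eta)); [right; field; lra |].
    apply Rmult_le_compat_l; lra. }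
  exists (A + A / eta). intros x t Hx Ht. apply Rabs_le_between in Ht.
  pose proof (tail_pos x).
  unfold tail. replace (x + t + exp 1) with ((x + exp 1) + t) by ring.
  destruct (Rle_or_lt 0 t) as [Ht0 | Ht0].
  - destruct (F_near (x + exp 1) (x + exp 1 + t) eta) as [Hn _]; try lra.
    + apply Rle_trans with A; [lra | apply Hfar; lra].
    + eapply Rle_trans; [exact Hn |]. apply Rmult_le_compat_r; [left; apply F_pos | lra].
  - destruct (F_near (x + exp 1 + t) (x + exp 1) eta) as [_ Hn]; try lra.
    + apply Rle_trans with A; [lra | apply Hfar; lra].
    + eapply Rle_trans; [exact Hn |]. apply Rmult_le_compat_r; [left; apply F_pos | lra].
Qed.

Lemma tail_dominated x u : 0 <= u <= x / 2 -> tail (x - u) <= exp 200 * tail x.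
Proof. intro Hu. pose proof exp_1_gt_2. apply F_far; lra. Qed.

Lemma RInt_Chasles_R (g : R -> R) a b c : ex_RInt g a b -> ex_RInt g b c ->
  RInt g a b + RInt g b c = RInt g a c :> R.
Proof. intros H1 H2. apply (RInt_Chasles g a b c); assumption. Qed.

Lemma ex_RInt_eq_on (f g : R -> R) a b : a <= b -> (forall x, a < x < b -> f x = g x) ->
  ex_RInt g a b -> ex_RInt f a b.
Proof.
  intros Hab Heq. apply ex_RInt_ext.
  intros x Hx. rewrite Rmin_left, Rmax_right in Hx by lra. symmetry. apply Heq, Hx.
Qed.

Lemma RInt_eq_on (f g : R -> R) a b : a <= b -> (forall x, a < x < b -> f x = g x) ->
  RInt f a b = RInt g a b.
Proof.
  intros Hab Heq. apply RInt_ext.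
  intros x Hx. rewrite Rmin_left, Rmax_right in Hx by lra. apply Heq, Hx.
Qed.

Lemma RInt_eq_0_on (f : R -> R) a b : a <= b -> (forall x, a < x < b -> f x = 0) -> RInt f a b = 0.
Proof.
  intros Hab H0. rewrite (RInt_eq_on f (fun _ => 0)) by assumption.
  rewrite RInt_const. apply Rmult_0_r.
Qed.

Lemma ex_RInt_eq_0_on (f : R -> R) a b : a <= b -> (forall x, a < x < b -> f x = 0) ->
  ex_RInt f a b.
Proof.
  intros Hab H0. apply (ex_RInt_eq_on f (fun _ => 0)); [assumption.. | apply ex_RInt_const].
Qed.

Lemma ex_RInt_continuous_nonneg (f : R -> R) : (forall u, 0 <= u -> continuous f u) ->
  forall a b, 0 <= a -> 0 <= b -> ex_RInt f a b.
Proof.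
  intros Hcont a b Ha Hb. apply (ex_RInt_continuous (V := R_CompleteNormedModule)).
  intros z Hz. apply Hcont. pose proof (Rmin_glb a b 0). pose proof (Rmin_l a b). lra.
Qed.

Lemma ex_RInt_join (f : R -> R) lo p :
  (forall a b, lo <= a -> a <= b -> b <= p -> ex_RInt f a b) ->
  (forall a b, p <= a -> a <= b -> ex_RInt f a b) ->
  forall a b, lo <= a -> a <= b -> ex_RInt f a b.
Proof.
  intros Hl Hr a b Ha Hab.
  destruct (Rle_or_lt b p); [apply Hl; lra |].
  destruct (Rle_or_lt p a); [apply Hr; lra |].
  apply ex_RInt_Chasles with p; [apply Hl | apply Hr]; lra.
Qed.

Lemma RInt_symmetric_half (k : R -> R) x : 0 <= x -> (forall u, k (x - u) = k u) ->
  ex_RInt k 0 x -> RInt k 0 x = 2 * RInt k 0 (x / 2).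
Proof.
  intros Hx Hsym Hex. change (RInt k 0 x = 2 * RInt k 0 (x / 2) :> R).
  assert (Hex1 : ex_RInt k 0 (x / 2))
    by (apply (ex_RInt_Chasles_1 k 0 (x / 2) x); [lra | exact Hex]).
  assert (Hex2 : ex_RInt k (x / 2) x)
    by (apply (ex_RInt_Chasles_2 k 0 (x / 2) x); [lra | exact Hex]).
  rewrite <- (RInt_Chasles_R k 0 (x / 2) x Hex1 Hex2).
  assert (Hend : -1 * (x / 2) + x = x / 2 /\ -1 * 0 + x = x) by (split; field).
  pose proof (RInt_comp_lin k (-1) x (x / 2) 0) as Hrefl.
  destruct Hend as [-> ->] in Hrefl.
  rewrite <- (Hrefl Hex2), (RInt_ext (fun y => scal (-1) (k (-1 * y + x))) (fun y => - k y)).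
  - assert (Hswap : RInt (fun y => - k y) (x / 2) 0 = RInt k 0 (x / 2)).
    { transitivity (opp (RInt k (x / 2) 0)).
      - apply (RInt_opp k). apply ex_RInt_swap, Hex1.
      - rewrite <- (opp_RInt_swap k 0 (x / 2) Hex1). apply opp_opp. }
    rewrite Hswap. ring.
  - intros y _. unfold scal; simpl; unfold mult; simpl.
    replace (-1 * y + x) with (x - y) by ring. rewrite Hsym. ring.
Qed.

Lemma has_integral_of_tails (f : R -> R) l1 l2 :
  (forall a b, a <= b -> ex_RInt f a b) ->
  (forall eps, 0 < eps -> exists M, forall a, a <= - M -> Rabs (RInt f a 0 - l1) < eps) ->
  (forall eps, 0 < eps -> exists M, forall b, M <= b -> Rabs (RInt f 0 b - l2) < eps) ->
  has_integral f (l1 + l2).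
Proof.
  intros Hex Hleft Hright. split.
  { intros a b Hab. constructor. apply ex_RInt_Reals_0, Hex, Hab. }
  intros eps Heps.
  destruct (Hleft (eps / 2)) as [M1 HM1]; [lra |].
  destruct (Hright (eps / 2)) as [M2 HM2]; [lra |].
  pose proof (Rmax_l (Rmax M1 M2) 0). pose proof (Rmax_r (Rmax M1 M2) 0).
  pose proof (Rmax_l M1 M2). pose proof (Rmax_r M1 M2).
  set (M := Rmax (Rmax M1 M2) 0) in *.
  exists M. intros a b Ha Hb pr.
  rewrite <- RInt_Reals, <- (RInt_Chasles_R f a 0 b) by (apply Hex; lra).
  specialize (HM1 a ltac:(lra)). specialize (HM2 b ltac:(lra)).
  apply Rabs_def2 in HM1. apply Rabs_def2 in HM2.
  apply Rabs_def1; lra.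
Qed.

Lemma ex_RInt_of_has_integral f l a b : has_integral f l -> a <= b -> ex_RInt f a b.
Proof. intros [Hloc _] Hab. destruct (Hloc a b Hab) as [pr]. apply ex_RInt_Reals_1, pr. Qed.

Lemma RInt_le_has_integral f l a b : (forall u, 0 <= f u) -> has_integral f l -> a <= b ->
  RInt f a b <= l.
Proof.
  intros Hpos Hf Hab. apply Rnot_lt_le. intro Hlt.
  destruct Hf as [Hloc Hlim].
  assert (Hex : forall c d, c <= d -> ex_RInt f c d)
    by (intros c d Hcd; apply ex_RInt_of_has_integral with l; [split |]; assumption).
  destruct (Hlim (RInt f a b - l)) as [M HM]; [lra |].
  pose proof (Rmin_l a (- Rabs M)). pose proof (Rmin_r a (- Rabs M)).
  pose proof (Rmax_l b (Rabs M)). pose proof (Rmax_r b (Rabs M)).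
  pose proof (Rle_abs M). pose proof (Rle_abs (- M)). rewrite Rabs_Ropp in *.
  set (a' := Rmin a (- Rabs M)) in *. set (b' := Rmax b (Rabs M)) in *.
  destruct (Hloc a' b') as [pr]; [lra |].
  specialize (HM a' b' ltac:(lra) ltac:(lra) pr).
  rewrite <- RInt_Reals in HM.
  rewrite <- (RInt_Chasles_R f a' a b'), <- (RInt_Chasles_R f a b b') in HM by (apply Hex; lra).
  assert (0 <= RInt f a' a) by (apply RInt_ge_0; [lra | apply Hex; lra | intros; apply Hpos]).
  assert (0 <= RInt f b b') by (apply RInt_ge_0; [lra | apply Hex; lra | intros; apply Hpos]).
  apply Rabs_def2 in HM. lra.
Qed.

Lemma RInt_scal_l (g : R -> R) c a b : ex_RInt g a b ->
  RInt (fun u => c * g u) a b = c * RInt g a b.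
Proof. apply (RInt_scal g a b c). Qed.

Lemma ex_RInt_scal_l (g : R -> R) c a b : ex_RInt g a b -> ex_RInt (fun u => c * g u) a b.
Proof. apply (ex_RInt_scal g a b c). Qed.

Lemma asym_equiv_scale (f g f' g' : R -> R) c X : c <> 0 ->
  (forall x, X <= x -> f' x = c * f x /\ g' x = c * g x) ->
  asym_equiv f g -> asym_equiv f' g'.
Proof.
  intros Hc Hfg Hequiv eps Heps.
  destruct (Hequiv eps Heps) as [M HM]. exists (Rmax X M). intros x Hx.
  destruct (Hfg x (Rle_trans _ _ _ (Rmax_l X M) Hx)) as [-> ->].
  replace (c * f x / (c * g x)) with (c * / c * (f x / g x))
    by (unfold Rdiv; rewrite Rinv_mult; ring).
  rewrite Rinv_r, Rmult_1_l by exact Hc.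
  apply HM. apply Rle_trans with (Rmax X M); [apply Rmax_r | exact Hx].
Qed.

Lemma asym_equiv_lt_twice (f g : R -> R) : asym_equiv f g ->
  exists M, forall x, M <= x -> 0 < g x -> f x < 2 * g x.
Proof.
  intros Hequiv. destruct (Hequiv 1 Rlt_0_1) as [M HM]. exists M. intros x Hx Hg.
  specialize (HM x Hx). apply Rabs_def2 in HM.
  apply (Rmult_lt_reg_r (/ g x)); [apply Rinv_0_lt_compat, Hg |].
  rewrite Rmult_assoc, Rinv_r by lra. fold (f x / g x). lra.
Qed.

Section DominatedLongTailedConvolution.

Variables (f : R -> R) (I K : R).
Hypothesis f_pos : forall u, 0 <= u -> 0 < f u.
Hypothesis f_cont : forall u, 0 <= u -> continuous f u.
Hypothesis I_pos : 0 < I.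
Hypothesis f_mass : forall eps, 0 < eps -> exists b0, 0 <= b0 /\
  forall b, b0 <= b -> I - eps < RInt f 0 b <= I.
Hypothesis f_long_tailed : forall eps A, 0 < eps -> 0 <= A -> exists X, forall x t,
  X <= x -> Rabs t <= A -> Rabs (f (x + t) - f x) <= eps * f x.
Hypothesis f_dominated : forall x u, 0 <= u <= x / 2 -> f (x - u) <= K * f x.

Lemma ex_RInt_conv x a b : 0 <= a <= x -> 0 <= b <= x ->
  ex_RInt (fun u => f (x - u) * f u) a b.
Proof.
  intros Ha Hb. apply (ex_RInt_continuous (V := R_CompleteNormedModule)). intros z Hz.
  assert (Hz' : 0 <= z <= x).
  { pose proof (Rmin_glb a b 0). pose proof (Rmax_lub a b x). lra. }
  apply (continuous_mult (fun u => f (x - u)) f); [| apply f_cont; lra].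
  apply (continuous_comp (fun u => x - u) f); [| apply f_cont; lra].
  apply (continuous_minus (fun _ => x) (fun u => u));
    [apply continuous_const | apply continuous_id].
Qed.

Lemma conv_near x A d : 0 <= A <= x ->
  (forall t, 0 <= t <= A -> Rabs (f (x - t) - f x) <= d * f x) ->
  Rabs (RInt (fun u => f (x - u) * f u) 0 A - f x * RInt f 0 A) <= d * f x * RInt f 0 A.
Proof.
  intros HA Hclose.
  assert (Hex : ex_RInt f 0 A) by (apply (ex_RInt_continuous_nonneg f f_cont); lra).
  assert (Hexk : ex_RInt (fun u => f (x - u) * f u) 0 A) by (apply ex_RInt_conv; lra).
  assert (Hpt : forall u, 0 < u < A ->
    (1 - d) * f x * f u <= f (x - u) * f u <= (1 + d) * f x * f u).
  { intros u Hu. specialize (Hclose u ltac:(lra)). apply Rabs_le_between in Hclose.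
    pose proof (f_pos u ltac:(lra)). split; apply Rmult_le_compat_r; lra. }
  assert (Hlo : RInt (fun u => (1 - d) * f x * f u) 0 A <= RInt (fun u => f (x - u) * f u) 0 A)
    by (apply RInt_le; [lra | apply ex_RInt_scal_l, Hex | exact Hexk | apply Hpt]).
  assert (Hhi : RInt (fun u => f (x - u) * f u) 0 A <= RInt (fun u => (1 + d) * f x * f u) 0 A)
    by (apply RInt_le; [lra | exact Hexk | apply ex_RInt_scal_l, Hex | apply Hpt]).
  rewrite !RInt_scal_l in Hlo, Hhi by exact Hex.
  apply Rabs_le. split; lra.
Qed.

Lemma conv_middle x A : 0 <= A <= x / 2 ->
  0 <= RInt (fun u => f (x - u) * f u) A (x / 2) <= K * f x * (RInt f 0 (x / 2) - RInt f 0 A).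
Proof.
  intros HA.
  assert (Hexk : ex_RInt (fun u => f (x - u) * f u) A (x / 2)) by (apply ex_RInt_conv; lra).
  assert (Hex : ex_RInt f A (x / 2)) by (apply (ex_RInt_continuous_nonneg f f_cont); lra).
  split.
  - apply RInt_ge_0; [lra | exact Hexk |]. intros u Hu.
    apply Rmult_le_pos; left; apply f_pos; lra.
  - pose proof (RInt_Chasles_R f 0 A (x / 2)
      ltac:(apply (ex_RInt_continuous_nonneg f f_cont); lra) Hex) as Hsplit.
    apply Rle_trans with (RInt (fun u => K * f x * f u) A (x / 2)).
    + apply RInt_le; [lra | exact Hexk | apply ex_RInt_scal_l, Hex |].
      intros u Hu. apply Rmult_le_compat_r; [left; apply f_pos; lra | apply f_dominated; lra].
    + rewrite RInt_scal_l by exact Hex. right. rewrite <- Hsplit. ring.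
Qed.

(* The classical argument that dominated variation and long tails give subexponentiality: by
   symmetry it suffices to integrate over [[0, x/2]]; on [[0, A]] the factor [f (x - u)] is
   [f x] up to [1 +- d], and on [[A, x/2]] it is at most [K f x] against a tail mass below [d]. *)
Theorem conv_asym_equiv :
  asym_equiv (fun x => RInt (fun u => f (x - u) * f u) 0 x) (fun x => 2 * I * f x).
Proof.
  intros eps Heps.
  assert (HK : 1 <= K).
  { pose proof (f_dominated 0 0 ltac:(lra)) as H0. rewrite Rminus_0_r in H0.
    pose proof (f_pos 0 ltac:(lra)). nra. }
  set (d := eps * I / (2 * (I + 1 + K))).
  assert (Hd : 0 < d) by (unfold d; apply Rdiv_lt_0_compat; nra).
  assert (Hdeps : d * (I + 1 + K) = eps * I / 2) by (unfold d; field; lra).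
  destruct (f_mass d Hd) as [A [HA Hmass]].
  destruct (f_long_tailed d A Hd HA) as [X HX].
  exists (Rmax X (2 * A)). intros x Hx.
  pose proof (Rmax_l X (2 * A)). pose proof (Rmax_r X (2 * A)).
  pose proof (f_pos x ltac:(lra)) as Hfx.
  destruct (Hmass A (Rle_refl A)) as [HmA HmA']. destruct (Hmass (x / 2) ltac:(lra)) as [_ Hmx].
  set (S := RInt (fun u => f (x - u) * f u)).
  assert (Hhalf : S 0 x = 2 * (S 0 A + S A (x / 2))).
  { unfold S. rewrite RInt_symmetric_half; [| lra | | apply ex_RInt_conv; lra].
    2: { intro u. replace (x - (x - u)) with u by ring. apply Rmult_comm. }
    rewrite <- (RInt_Chasles_R _ 0 A (x / 2)) by (apply ex_RInt_conv; lra). reflexivity. }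
  assert (Hclose : forall t, 0 <= t <= A -> Rabs (f (x - t) - f x) <= d * f x).
  { intros t Ht. replace (x - t) with (x + - t) by ring.
    apply HX; [lra | rewrite Rabs_Ropp, Rabs_pos_eq; lra]. }
  pose proof (conv_near x A d ltac:(lra) Hclose) as Hnear.
  pose proof (conv_middle x A ltac:(lra)) as Hmid.
  fold S in Hnear, Hmid. apply Rabs_le_between in Hnear.
  assert (Hgap : Rabs (S 0 A + S A (x / 2) - I * f x) <= eps * I / 2 * f x).
  { assert (d * f x * RInt f 0 A <= d * f x * I) by (apply Rmult_le_compat_l; nra).
    assert (f x * (I - d) <= f x * RInt f 0 A) by (apply Rmult_le_compat_l; lra).
    assert (f x * RInt f 0 A <= f x * I) by (apply Rmult_le_compat_l; lra).
    assert (K * f x * (RInt f 0 (x / 2) - RInt f 0 A) <= K * f x * d)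
      by (apply Rmult_le_compat_l; nra).
    assert (d * f x * I + f x * d + K * f x * d = eps * I / 2 * f x) by (rewrite <- Hdeps; ring).
    apply Rabs_le. split; nra. }
  rewrite Hhalf.
  replace (2 * (S 0 A + S A (x / 2)) / (2 * I * f x) - 1)
    with ((S 0 A + S A (x / 2) - I * f x) / (I * f x)) by (field; lra).
  unfold Rdiv. rewrite Rabs_mult, Rabs_inv, (Rabs_pos_eq (I * f x)) by nra.
  apply (Rmult_lt_reg_r (I * f x)); [nra |].
  rewrite Rmult_assoc, Rinv_l, Rmult_1_r by nra.
  apply Rle_lt_trans with (eps * I / 2 * f x); [exact Hgap |].
  assert (0 < eps * I * f x) by (apply Rmult_lt_0_compat; [apply Rmult_lt_0_compat |]; lra).
  lra.
Qed.

End DominatedLongTailedConvolution.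

Lemma bounded_nondecreasing_limit (g : R -> R) M :
  (forall b1 b2, 0 <= b1 <= b2 -> g b1 <= g b2) -> (forall b, 0 <= b -> g b <= M) ->
  { l | forall eps, 0 < eps -> exists b0, 0 <= b0 /\ forall b, b0 <= b -> l - eps < g b <= l }.
Proof.
  intros Hmono Hbnd.
  set (E z := exists b, 0 <= b /\ z = g b).
  assert (HE : bound E) by (exists M; intros z [b [Hb ->]]; apply Hbnd, Hb).
  destruct (completeness E HE) as [l [Hub Hlub]]; [exists (g 0), 0; split; [lra | reflexivity] |].
  exists l. intros eps Heps.
  destruct (classic (exists b0, 0 <= b0 /\ l - eps < g b0)) as [[b0 [Hb0 Hgt]] | Hnone].
  - exists b0. split; [exact Hb0 |]. intros b Hb. split.
    + pose proof (Hmono b0 b ltac:(lra)). lra.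
    + apply Hub. exists b. split; [lra | reflexivity].
  - exfalso. assert (Hub' : is_upper_bound E (l - eps)).
    { intros z [b [Hb ->]]. apply Rnot_lt_le. intro Hlt. apply Hnone. exists b. auto. }
    pose proof (Hlub _ Hub'). lra.
Qed.

Lemma ex_RInt_tail a b : 0 <= a -> 0 <= b -> ex_RInt tail a b.
Proof. exact (ex_RInt_continuous_nonneg tail tail_continuous a b). Qed.

Lemma RInt_tail_mono b1 b2 : 0 <= b1 <= b2 -> RInt tail 0 b1 <= RInt tail 0 b2.
Proof.
  intros Hb. rewrite <- (RInt_Chasles_R tail 0 b1 b2) by (apply ex_RInt_tail; lra).
  assert (0 <= RInt tail b1 b2)
    by (apply RInt_ge_0; [lra | apply ex_RInt_tail; lra | intros; left; apply tail_pos]).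
  lra.
Qed.

Lemma RInt_tail_le_1 b : 0 <= b -> RInt tail 0 b <= 1.
Proof.
  intro Hb. pose proof exp_1_gt_2.
  assert (Hprim : is_RInt (fun u => / ((u + exp 1) * (u + exp 1))) 0 b
                    (minus (- / (b + exp 1)) (- / (0 + exp 1)))).
  { apply (is_RInt_derive (fun u => - / (u + exp 1))); intros u Hu;
      rewrite Rmin_left, Rmax_right in Hu by lra.
    - auto_derive; [lra | field; lra].
    - apply (ex_derive_continuous (K := R_AbsRing) (V := R_NormedModule)). auto_derive. nra. }
  apply Rle_trans with (RInt (fun u => / ((u + exp 1) * (u + exp 1))) 0 b).
  - apply RInt_le; [lra | apply ex_RInt_tail; lra | eexists; exact Hprim |].
    intros u Hu. apply tail_le_inv_sqr. lra.
  - rewrite (is_RInt_unique _ _ _ _ Hprim). unfold minus, plus, opp; simpl.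
    assert (0 < / (b + exp 1)) by (apply Rinv_0_lt_compat; lra).
    assert (/ (0 + exp 1) <= / 1) by (apply Rinv_le_contravar; lra).
    rewrite Rinv_1 in *. lra.
Qed.

Definition mass : R :=
  proj1_sig (bounded_nondecreasing_limit (RInt tail 0) 1 RInt_tail_mono RInt_tail_le_1).

Lemma RInt_tail_to_mass eps : 0 < eps -> exists b0, 0 <= b0 /\
  forall b, b0 <= b -> mass - eps < RInt tail 0 b <= mass.
Proof. unfold mass. destruct bounded_nondecreasing_limit as [l Hl]. apply Hl. Qed.

Lemma mass_pos : 0 < mass.
Proof.
  destruct (RInt_tail_to_mass 1) as [b0 [Hb0 Hlim]]; [lra |].
  destruct (Hlim (Rmax b0 1) (Rmax_l b0 1)) as [_ Hle].
  assert (Hpos : 0 < RInt tail 0 1).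
  { apply RInt_gt_0; [lra | intros; apply tail_pos | intros u Hu; apply tail_continuous; lra]. }
  pose proof (RInt_tail_mono 1 (Rmax b0 1) ltac:(split; [lra | apply Rmax_r])). lra.
Qed.

Definition p1 (u : R) := if Rle_dec 0 u then / mass * tail u else 0.

Lemma p1_nonneg u : 0 <= p1 u.
Proof.
  unfold p1. destruct Rle_dec; [| lra].
  left. apply Rmult_lt_0_compat; [apply Rinv_0_lt_compat, mass_pos | apply tail_pos].
Qed.

Lemma p1_pos u : 0 <= u -> p1 u = / mass * tail u.
Proof. intro Hu. unfold p1. destruct Rle_dec; [reflexivity | lra]. Qed.

Lemma p1_neg u : u < 0 -> p1 u = 0.
Proof. intro Hu. unfold p1. destruct Rle_dec; [lra | reflexivity]. Qed.

Lemma ex_RInt_p1 a b : a <= b -> ex_RInt p1 a b.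
Proof.
  intro Hab. apply (ex_RInt_join p1 a 0); [| | lra | exact Hab].
  - intros c d Hc Hcd Hd. apply ex_RInt_eq_0_on; [lra |]. intros u Hu. apply p1_neg. lra.
  - intros c d Hc Hcd. apply (ex_RInt_eq_on p1 (fun u => / mass * tail u)); [lra | | ].
    + intros u Hu. apply p1_pos. lra.
    + apply ex_RInt_scal_l, ex_RInt_tail; lra.
Qed.

Lemma RInt_p1_right b : 0 <= b -> RInt p1 0 b = / mass * RInt tail 0 b.
Proof.
  intro Hb. rewrite <- RInt_scal_l by (apply ex_RInt_tail; lra).
  apply RInt_eq_on; [lra |]. intros u Hu. apply p1_pos. lra.
Qed.

Lemma RInt_p1_right_to_1 eps : 0 < eps ->
  exists M, forall b, M <= b -> Rabs (RInt p1 0 b - 1) < eps.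
Proof.
  intro Heps. pose proof mass_pos.
  destruct (RInt_tail_to_mass (eps * mass)) as [b0 [Hb0 Hlim]]; [nra |].
  exists b0. intros b Hb. destruct (Hlim b Hb) as [Hlo Hhi].
  rewrite RInt_p1_right by lra.
  replace (/ mass * RInt tail 0 b - 1) with ((RInt tail 0 b - mass) / mass) by (field; lra).
  unfold Rdiv. rewrite Rabs_mult, Rabs_inv, (Rabs_pos_eq mass), Rabs_left1 by lra.
  apply (Rmult_lt_reg_r mass); [lra |]. rewrite Rmult_assoc, Rinv_l, Rmult_1_r by lra. lra.
Qed.

Lemma p1_density : density p1.
Proof.
  split; [exact p1_nonneg |]. replace 1 with (0 + 1) by ring.
  apply has_integral_of_tails; [exact ex_RInt_p1 | | exact RInt_p1_right_to_1].
  intros eps Heps. exists 0. intros a Ha.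
  rewrite RInt_eq_0_on by (lra || (intros u Hu; apply p1_neg; lra)).
  rewrite Rminus_0_r, Rabs_R0. exact Heps.
Qed.

Lemma p1_classL : classL p1.
Proof.
  split; [exact p1_nonneg |]. split.
  { exists 0. intros x Hx. rewrite p1_pos by exact Hx.
    apply Rmult_lt_0_compat; [apply Rinv_0_lt_compat, mass_pos | apply tail_pos]. }
  intros a. apply (asym_equiv_scale (fun x => tail (x + a)) tail _ _ (/ mass) (Rabs a)).
  { apply Rinv_neq_0_compat. pose proof mass_pos. lra. }
  { intros x Hx. pose proof (Rle_abs (- a)). pose proof (Rabs_pos a). rewrite Rabs_Ropp in *.
    split; apply p1_pos; lra. }
  intros eps Heps.
  destruct (tail_long_tailed (eps / 2) (Rabs a)) as [X HX]; [lra | apply Rabs_pos |].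
  exists X. intros x Hx. pose proof (tail_pos x).
  specialize (HX x a Hx (Rle_refl _)).
  replace (tail (x + a) / tail x - 1) with ((tail (x + a) - tail x) / tail x) by (field; lra).
  unfold Rdiv. rewrite Rabs_mult, Rabs_inv, (Rabs_pos_eq (tail x)) by lra.
  apply (Rmult_lt_reg_r (tail x)); [lra |]. rewrite Rmult_assoc, Rinv_l, Rmult_1_r by lra. nra.
Qed.

Lemma p1_conv_inside x u : 0 <= u <= x ->
  p1 (x - u) * p1 u = / mass * / mass * (tail (x - u) * tail u).
Proof. intro Hu. rewrite !p1_pos by lra. ring. Qed.

Lemma p1_conv_outside x u : u < 0 \/ x < u -> p1 (x - u) * p1 u = 0.
Proof.
  intros [Hu | Hu]; [rewrite (p1_neg u) | rewrite (p1_neg (x - u))]; lra || ring.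
Qed.

Lemma has_integral_conv_p1 x : 0 <= x ->
  has_integral (fun u => p1 (x - u) * p1 u) (RInt (fun u => p1 (x - u) * p1 u) 0 x).
Proof.
  intro Hx. set (k := fun u => p1 (x - u) * p1 u).
  assert (Hex : forall a b, a <= b -> ex_RInt k a b).
  { intros a b Hab. apply (ex_RInt_join k a 0); [| | lra | exact Hab].
    - intros c d Hc Hcd Hd. apply ex_RInt_eq_0_on; [lra |].
      intros u Hu. apply p1_conv_outside. lra.
    - apply (ex_RInt_join k 0 x).
      + intros c d Hc Hcd Hd.
        apply (ex_RInt_eq_on k (fun u => / mass * / mass * (tail (x - u) * tail u))); [lra | |].
        * intros u Hu. apply p1_conv_inside. lra.
        * apply ex_RInt_scal_l, ex_RInt_conv; [exact tail_continuous | lra | lra].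
      + intros c d Hc Hcd. apply ex_RInt_eq_0_on; [lra |].
        intros u Hu. apply p1_conv_outside. lra. }
  replace (RInt k 0 x) with (0 + RInt k 0 x) by ring.
  apply has_integral_of_tails; [exact Hex | |].
  - intros eps Heps. exists 0. intros a Ha.
    rewrite RInt_eq_0_on by (lra || (intros u Hu; apply p1_conv_outside; lra)).
    rewrite Rminus_0_r, Rabs_R0. exact Heps.
  - intros eps Heps. exists x. intros b Hb.
    rewrite <- (RInt_Chasles_R k 0 x b) by (apply Hex; lra).
    rewrite (RInt_eq_0_on k x b) by (lra || (intros u Hu; apply p1_conv_outside; lra)).
    replace (RInt k 0 x + 0 - RInt k 0 x) with 0 by ring. rewrite Rabs_R0. exact Heps.
Qed.

Lemma p1_conv_sq_asym : conv_sq_asym p1.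
Proof.
  pose proof mass_pos as Hm.
  exists 0, (fun x => RInt (fun u => p1 (x - u) * p1 u) 0 x). split.
  { exact has_integral_conv_p1. }
  apply (asym_equiv_scale (fun x => RInt (fun u => tail (x - u) * tail u) 0 x)
           (fun x => 2 * mass * tail x) _ _ (/ mass * / mass) 0).
  - apply Rmult_integral_contrapositive; split; apply Rinv_neq_0_compat; lra.
  - intros x Hx. split.
    + rewrite <- RInt_scal_l by (apply ex_RInt_conv; [exact tail_continuous | lra | lra]).
      apply RInt_eq_on; [lra |]. intros u Hu. apply p1_conv_inside. lra.
    + rewrite p1_pos by lra. field. lra.
  - apply (conv_asym_equiv tail mass (exp 200)).
    + intros u _. apply tail_pos.
    + exact tail_continuous.
    + exact Hm.
    + exact RInt_tail_to_mass.
    + exact tail_long_tailed.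
    + exact tail_dominated.
Qed.

Lemma p1_Sd : Sd p1.
Proof. split; [split; [exact p1_density | exact p1_classL] | exact p1_conv_sq_asym]. Qed.

Definition p2 (u : R) := if Rle_dec 0 u then / 2 * p1 u else / (2 * (1 - u) ^ 2).

Lemma p2_right u : 0 <= u -> p2 u = / 2 * p1 u.
Proof. intro Hu. unfold p2. destruct Rle_dec; [reflexivity | lra]. Qed.

Lemma p2_left u : u < 0 -> p2 u = / (2 * (1 - u) ^ 2).
Proof. intro Hu. unfold p2. destruct Rle_dec; [lra | reflexivity]. Qed.

Lemma p2_nonneg u : 0 <= p2 u.
Proof.
  unfold p2. destruct Rle_dec.
  - pose proof (p1_nonneg u). lra.
  - left. apply Rinv_0_lt_compat. pose proof (pow_lt (1 - u) 2 ltac:(lra)). lra.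
Qed.

Lemma is_RInt_p2_left a : a <= 0 -> is_RInt p2 a 0 (/ 2 - / (2 * (1 - a))).
Proof.
  intro Ha.
  apply (is_RInt_ext (fun u => / (2 * (1 - u) ^ 2))).
  { intros u Hu. rewrite Rmin_left, Rmax_right in Hu by lra. symmetry. apply p2_left. lra. }
  replace (/ 2 - / (2 * (1 - a))) with (minus (/ (2 * (1 - 0))) (/ (2 * (1 - a))))
    by (unfold minus, plus, opp; simpl; field; lra).
  apply (is_RInt_derive (fun u => / (2 * (1 - u)))); intros u Hu;
    rewrite Rmin_left, Rmax_right in Hu by lra.
  - auto_derive; [lra | field; lra].
  - apply (ex_derive_continuous (K := R_AbsRing) (V := R_NormedModule)). auto_derive. nra.
Qed.

Lemma ex_RInt_p2 a b : a <= b -> ex_RInt p2 a b.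
Proof.
  intro Hab. apply (ex_RInt_join p2 a 0); [| | lra | exact Hab].
  - intros c d Hc Hcd Hd.
    apply (ex_RInt_Chasles_1 p2 c d 0); [lra |].
    eexists. apply is_RInt_p2_left. lra.
  - intros c d Hc Hcd. apply (ex_RInt_eq_on p2 (fun u => / 2 * p1 u)); [lra | |].
    + intros u Hu. apply p2_right. lra.
    + apply ex_RInt_scal_l, ex_RInt_p1, Hcd.
Qed.

Lemma p2_density : density p2.
Proof.
  split; [exact p2_nonneg |]. replace 1 with (/ 2 + / 2) by field.
  apply has_integral_of_tails; [exact ex_RInt_p2 | |].
  - intros eps Heps. exists (/ eps). intros a Ha.
    assert (Hinv : 0 < / eps) by (apply Rinv_0_lt_compat, Heps).
    rewrite (is_RInt_unique _ _ _ _ (is_RInt_p2_left a ltac:(lra))).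
    replace (/ 2 - / (2 * (1 - a)) - / 2) with (- / (2 * (1 - a))) by ring.
    rewrite Rabs_Ropp, Rabs_pos_eq by (left; apply Rinv_0_lt_compat; lra).
    rewrite <- (Rinv_inv eps). apply Rinv_lt_contravar; [| lra].
    apply Rmult_lt_0_compat; [exact Hinv | lra].
  - intros eps Heps. destruct (RInt_p1_right_to_1 (2 * eps)) as [M HM]; [lra |].
    exists (Rmax M 0). intros b Hb.
    pose proof (Rmax_l M 0). pose proof (Rmax_r M 0).
    specialize (HM b ltac:(lra)). apply Rabs_def2 in HM.
    rewrite (RInt_eq_on p2 (fun u => / 2 * p1 u)) by (lra || (intros u Hu; apply p2_right; lra)).
    rewrite RInt_scal_l by (apply ex_RInt_p1; lra).
    apply Rabs_def1; lra.
Qed.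

Lemma p2_asym_equiv : asym_equiv p2 (fun x => / 2 * p1 x).
Proof.
  intros eps Heps. exists 0. intros x Hx.
  rewrite p2_right by exact Hx.
  assert (0 < p1 x) by (rewrite p1_pos by exact Hx;
    apply Rmult_lt_0_compat; [apply Rinv_0_lt_compat, mass_pos | apply tail_pos]).
  replace (/ 2 * p1 x / (/ 2 * p1 x) - 1) with 0 by (field; lra).
  rewrite Rabs_R0. exact Heps.
Qed.

(* For [u] in [[-2Y, -Y]], [x - u + e] lies in [[Y, 3Y]] and [1 / (2 (1 - u)^2) >= 1 / (18 Y^2)]. *)
Lemma p2_conv_pointwise x Y u : 0 <= x -> x + exp 1 <= Y -> -2 * Y <= u <= - Y ->
  F Y / (36 * exp 200 * mass * (Y * Y)) <= p2 (x - u) * p2 u.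
Proof.
  intros Hx HY Hu. pose proof exp_1_gt_2. pose proof mass_pos. pose proof (exp_pos 200).
  rewrite p2_right, p1_pos, p2_left by lra.
  assert (Hfar : F Y <= exp 200 * tail (x - u)) by (apply F_far; lra).
  assert (Hleft : / (18 * (Y * Y)) <= / (2 * (1 - u) ^ 2))
    by (apply Rinv_le_contravar; [nra | simpl; nra]).
  replace (F Y / (36 * exp 200 * mass * (Y * Y)))
    with ((/ 2 * (/ mass * (F Y / exp 200))) * / (18 * (Y * Y))) by (field; nra).
  apply Rmult_le_compat; [| left; apply Rinv_0_lt_compat; nra | | exact Hleft].
  - apply Rmult_le_pos; [lra |]. apply Rmult_le_pos; [left; apply Rinv_0_lt_compat; lra |].
    apply Rdiv_le_0_compat; [left; apply F_pos | lra].
  - apply Rmult_le_compat_l; [lra |].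
    apply Rmult_le_compat_l; [left; apply Rinv_0_lt_compat; lra |].
    apply (Rmult_le_reg_l (exp 200)); [lra |]. unfold Rdiv.
    rewrite (Rmult_comm (F Y)), <- Rmult_assoc, Rinv_r, Rmult_1_l by lra. exact Hfar.
Qed.

Lemma p2_conv_lower x Y l : 0 <= x -> x + exp 1 <= Y ->
  has_integral (fun u => p2 (x - u) * p2 u) l -> F Y / (36 * exp 200 * mass * Y) <= l.
Proof.
  intros Hx HY Hl. pose proof exp_1_gt_2. pose proof mass_pos. pose proof (exp_pos 200).
  set (c := F Y / (36 * exp 200 * mass * (Y * Y))).
  apply Rle_trans with (RInt (fun _ => c) (-2 * Y) (- Y)).
  { right. rewrite RInt_const. unfold scal; simpl; unfold mult; simpl. unfold c. field. nra. }
  apply Rle_trans with (RInt (fun u => p2 (x - u) * p2 u) (-2 * Y) (- Y)).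
  - apply RInt_le; [lra | apply ex_RInt_const | apply (ex_RInt_of_has_integral _ l _ _ Hl); lra |].
    intros u Hu. apply p2_conv_pointwise; lra.
  - apply (RInt_le_has_integral _ l); [| exact Hl | lra].
    intro u. apply Rmult_le_pos; apply p2_nonneg.
Qed.

Lemma sin_peaks B : exists s, B < s /\ sin (32 * s) = 1.
Proof.
  pose proof PI_RGT_0.
  destruct (INR_archimed (PI / 16) B) as [k Hk]; [lra |].
  exists ((PI / 2 + 2 * INR k * PI) / 32). split.
  - lra.
  - replace (32 * ((PI / 2 + 2 * INR k * PI) / 32)) with (PI / 2 + 2 * INR k * PI) by field.
    rewrite sin_period. apply sin_PI2.
Qed.

Lemma F_peak s : sin (32 * s) = 1 -> F (exp (exp s)) = exp (- (4 * exp s)).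
Proof. intro Hs. rewrite F_exp_exp, Hs. f_equal. ring. Qed.

Lemma F_trough s : sin (32 * s) = 1 ->
  F (exp (exp (s + PI / 32))) = exp (- (2 * exp (s + PI / 32))).
Proof.
  intro Hs. rewrite F_exp_exp.
  replace (32 * (s + PI / 32)) with (32 * s + PI) by field.
  rewrite neg_sin, Hs. f_equal. ring.
Qed.

Lemma trough_after_peak s : exp s <= exp (s + PI / 32) <= 5 / 4 * exp s.
Proof.
  pose proof PI_RGT_0. pose proof PI_4. pose proof (exp_pos s).
  rewrite exp_plus.
  pose proof (exp_ineq1_le (PI / 32)). pose proof (exp_le_1_plus_2x (PI / 32) ltac:(lra)).
  split; nra.
Qed.

Lemma p2_at_peak s : sin (32 * s) = 1 -> 0 <= exp (exp s) - exp 1 ->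
  p2 (exp (exp s) - exp 1) = / 2 * / mass * exp (- (4 * exp s)).
Proof.
  intros Hs Hx. rewrite p2_right, p1_pos by exact Hx. unfold tail.
  replace (exp (exp s) - exp 1 + exp 1) with (exp (exp s)) by ring.
  rewrite F_peak by exact Hs. ring.
Qed.

Lemma p2_conv_near_trough s x l : sin (32 * s) = 1 -> 0 <= x ->
  x + exp 1 <= exp (exp (s + PI / 32)) -> has_integral (fun u => p2 (x - u) * p2 u) l ->
  exp (- (3 * exp (s + PI / 32))) / (36 * exp 200 * mass) <= l.
Proof.
  intros Hs Hx HY Hl. eapply Rle_trans; [| exact (p2_conv_lower x _ l Hx HY Hl)].
  rewrite F_trough by exact Hs. set (lY := exp (s + PI / 32)).
  right. replace (- (3 * lY)) with (- (2 * lY) + - lY) by ring.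
  rewrite exp_plus, (exp_Ropp lY).
  pose proof (exp_pos lY). pose proof (exp_pos 200). pose proof mass_pos. field. lra.
Qed.

Lemma peak_bound_le_trough_bound m L lY : 0 < m -> 1088 <= L -> lY <= 5 / 4 * L ->
  2 * / m * exp (- (4 * L)) <= exp (- (3 * lY)) / (36 * exp 200 * m).
Proof.
  intros Hm HL HlY. pose proof (exp_pos 200).
  apply (Rmult_le_reg_r (36 * exp 200 * m)); [nra |].
  replace (exp (- (3 * lY)) / (36 * exp 200 * m) * (36 * exp 200 * m))
    with (exp (- (3 * lY))) by (field; lra).
  replace (2 * / m * exp (- (4 * L)) * (36 * exp 200 * m))
    with (72 * exp 200 * exp (- (4 * L))) by (field; lra).
  apply Rle_trans with (exp 72 * exp 200 * exp (- (4 * L))).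
  - pose proof (exp_ineq1_le 72). pose proof (exp_pos (- (4 * L))).
    apply Rmult_le_compat_r; [lra |]. apply Rmult_le_compat_r; lra.
  - rewrite <- !exp_plus. apply exp_le_mono. lra.
Qed.

(* At [x + e = exp (exp s)] with [sin (32 s) = 1] the tail index is 4, so [p2 x ~ (x + e)^-4];
   at [Y = exp (exp (s + PI/32)) <= (x + e)^(5/4)] it is 2, and the left tail of [p2] carries
   the values near [Y] into the convolution at [x], which is therefore at least of order
   [Y^-3 >= (x + e)^(-15/4)]. *)
Lemma p2_not_Sd : ~ Sd p2.
Proof.
  intros [_ [X [h [Hh Hequiv]]]].
  destruct (asym_equiv_lt_twice _ _ Hequiv) as [M HM].
  pose proof mass_pos. pose proof exp_1_gt_2. pose proof exp_le_3.
  destruct (sin_peaks (Rmax 1088 (Rmax X M + 3))) as [s [Hs Hsin]].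
  pose proof (Rmax_l 1088 (Rmax X M + 3)). pose proof (Rmax_r 1088 (Rmax X M + 3)).
  pose proof (Rmax_l X M). pose proof (Rmax_r X M).
  pose proof (trough_after_peak s) as [HlY HlY'].
  set (L := exp s) in *. set (lY := exp (s + PI / 32)) in *. set (x := exp L - exp 1).
  assert (HL : s + 1 <= L) by (pose proof (exp_ineq1_le s); unfold L; lra).
  assert (Hx : L + 1 - exp 1 <= x) by (pose proof (exp_ineq1_le L); unfold x; lra).
  assert (HY : x + exp 1 <= exp lY) by (unfold x; pose proof (exp_le_mono L lY HlY); lra).
  assert (Hp2x : p2 x = / 2 * / mass * exp (- (4 * L)))
    by (apply p2_at_peak; [exact Hsin | change (0 <= x); lra]).
  assert (Hup : h x < 2 * / mass * exp (- (4 * L))).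
  { assert (0 < p2 x) by (rewrite Hp2x; pose proof (exp_pos (- (4 * L)));
      apply Rmult_lt_0_compat; [apply Rmult_lt_0_compat; [lra | apply Rinv_0_lt_compat] |]; lra).
    specialize (HM x ltac:(lra) ltac:(lra)). rewrite Hp2x in HM. lra. }
  pose proof (p2_conv_near_trough s x (h x) Hsin ltac:(lra) HY (Hh x ltac:(lra))) as Hlow.
  fold lY in Hlow.
  pose proof (peak_bound_le_trough_bound mass L lY ltac:(lra) ltac:(lra) HlY'). lra.
Qed.

Theorem theorem1p2 :
  exists (p1 p2 : R -> R) (c : R),
    0 < c /\ density p1 /\ density p2 /\
    Sd p1 /\ ~ Sd p2 /\
    asym_equiv p2 (fun x => c * p1 x).
Proof.
  exists p1, p2, (/ 2).
  split; [lra |]. split; [exact p1_density |]. split; [exact p2_density |].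
  split; [exact p1_Sd |]. split; [exact p2_not_Sd | exact p2_asym_equiv].
Qed.
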